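(* Let $N,\mu,\beta,\sigma,\gamma,p>0$ and $0<\rho<1$ and consider the system $$S'=\mu N-\tfrac{\beta(1-\rho)}{N}SI-\tfrac{p}{N}S-\mu S,\qquad E'=\tfrac{\beta(1-\rho)}{N}SI-(\sigma+\mu)E,\qquad I'=\sigma E-(\gamma+\mu)I$$ on $\Omega=\{(S,E,I)\in\mathbb{R}_+^3: S+E+I\le N\}$. Let $\mathcal{R}_0=\dfrac{\mu N\sigma\beta(1-\rho)}{(\sigma+\mu)(\gamma+\mu)(p+\mu N)}$. If $\mathcal{R}_0>1$, then the endemic equilibrium $(S^e,E^e,I^e)$, with $$S^e=\frac{(\sigma+\mu)(\gamma+\mu)N}{\sigma\beta(1-\rho)},\quad I^e=\frac{\mu N\sigma\beta(1-\rho)-(\sigma+\mu)(\gamma+\mu)(p+\mu N)}{(\sigma+\mu)(\gamma+\mu)\beta(1-\rho)},\quad E^e=\frac{\gamma+\mu}{\sigma}I^e,$$ is globally asymptotically stable in the interior of $\Omega$.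
   Context: Global asymptotic stability in the interior of $\Omega$: the equilibrium is stable and every solution starting in the interior of $\Omega$ converges to it as $t\to+\infty$. *)

From Stdlib Require Import Reals Lra.
From Coquelicot Require Import Coquelicot.
Open Scope R_scope.

Definition fS (N mu beta p rho : R) (S E I : R) : R :=
  mu * N - beta * (1 - rho) / N * S * I - p / N * S - mu * S.
Definition fE (N mu beta sigma rho : R) (S E I : R) : R :=
  beta * (1 - rho) / N * S * I - (sigma + mu) * E.
Definition fI (mu sigma gamma : R) (S E I : R) : R :=
  sigma * E - (gamma + mu) * I.

Definition in_interior_Omega (N S E I : R) : Prop :=
  0 < S /\ 0 < E /\ 0 < I /\ S + E + I < N.

Definition is_solution (N mu beta sigma gamma p rho : R)
    (S E I : R -> R) : Prop :=
  (forall t, 0 < t ->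
     is_derive S t (fS N mu beta p rho (S t) (E t) (I t)) /\
     is_derive E t (fE N mu beta sigma rho (S t) (E t) (I t)) /\
     is_derive I t (fI mu sigma gamma (S t) (E t) (I t))) /\
  filterlim S (at_right 0) (locally (S 0)) /\
  filterlim E (at_right 0) (locally (E 0)) /\
  filterlim I (at_right 0) (locally (I 0)).

Definition basic_R0 (N mu beta sigma gamma p rho : R) : R :=
  mu * N * sigma * beta * (1 - rho) /
    ((sigma + mu) * (gamma + mu) * (p + mu * N)).

Definition Se (N mu beta sigma gamma rho : R) : R :=
  (sigma + mu) * (gamma + mu) * N / (sigma * beta * (1 - rho)).
Definition Ie (N mu beta sigma gamma p rho : R) : R :=
  (mu * N * sigma * beta * (1 - rho)
     - (sigma + mu) * (gamma + mu) * (p + mu * N)) /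
    ((sigma + mu) * (gamma + mu) * beta * (1 - rho)).
Definition Ee (N mu beta sigma gamma p rho : R) : R :=
  (gamma + mu) / sigma * Ie N mu beta sigma gamma p rho.

Definition dist3 (a1 a2 a3 b1 b2 b3 : R) : R :=
  sqrt ((a1 - b1) ^ 2 + (a2 - b2) ^ 2 + (a3 - b3) ^ 2).

Definition GAS_interior (N mu beta sigma gamma p rho xs xe xi : R) : Prop :=
  (forall eps, 0 < eps -> exists delta, 0 < delta /\
     forall S E I : R -> R,
       is_solution N mu beta sigma gamma p rho S E I ->
       in_interior_Omega N (S 0) (E 0) (I 0) ->
       dist3 (S 0) (E 0) (I 0) xs xe xi < delta ->
       forall t, 0 <= t -> dist3 (S t) (E t) (I t) xs xe xi < eps) /\
  (forall S E I : R -> R,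
     is_solution N mu beta sigma gamma p rho S E I ->
     in_interior_Omega N (S 0) (E 0) (I 0) ->
     is_lim S p_infty xs /\ is_lim E p_infty xe /\ is_lim I p_infty xi).

From Stdlib Require Import Reals Lra Psatz Classical.
From Coquelicot Require Import Coquelicot.
Open Scope R_scope.

(* Write b = beta (1 - rho) / N, d = p / N + mu and volterra u = u - 1 - ln u >= 0.
   The Goh-Volterra function
     V = Se volterra (S / Se) + Ee volterra (E / Ee) + (sigma + mu) / sigma * Ie volterra (I / Ie)
   satisfies, along solutions in the open octant,
     V' = - d (S - Se)^2 / S - b Se Ie (volterra x + volterra y + volterra z)
   for three ratios with x y z = 1.  The sublevel sets of V are compact in the open
   octant, which gives positivity and boundedness of solutions and Lyapunov stability.
   For attractivity, V decreases to a limit, so Barbalat's lemma turns the dissipation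
   into S -> Se and E Ie - Ee I -> 0; Barbalat once more, applied to S, gives S' -> 0,
   and the S-equation then forces I -> Ie, whence E -> Ee. *)

Ltac pos := repeat (apply Rmult_lt_0_compat || apply Rdiv_lt_0_compat
  || apply Rinv_0_lt_compat); try assumption; try lra.

Definition volterra (u : R) : R := u - 1 - ln u.

Lemma ln_le_sub1 u : 0 < u -> ln u <= u - 1.
Proof.
  intros Hu. pose proof (exp_ineq1_le (ln u)) as H.
  rewrite exp_ln in H; lra.
Qed.

Lemma volterra_ge0 u : 0 < u -> 0 <= volterra u.
Proof. intros Hu. pose proof (ln_le_sub1 u Hu). unfold volterra; lra. Qed.

Lemma volterra_le_sq_div u : 0 < u -> volterra u <= (u - 1) ^ 2 / u.
Proof.
  intros Hu. pose proof (ln_le_sub1 (/ u) (Rinv_0_lt_compat u Hu)) as H.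
  rewrite ln_Rinv in H by lra.
  replace ((u - 1) ^ 2 / u) with (u - 2 + / u) by (field; lra).
  unfold volterra; lra.
Qed.

Lemma volterra_ge_sqrt u : 0 < u -> (sqrt u - 1) ^ 2 <= volterra u.
Proof.
  intros Hu. pose proof (sqrt_lt_R0 u Hu) as Hw.
  pose proof (sqrt_sqrt u ltac:(lra)) as Hww.
  pose proof (ln_le_sub1 (sqrt u) Hw).
  assert (Hln : ln u = 2 * ln (sqrt u)).
  { rewrite <- Hww at 1. rewrite ln_mult by lra. ring. }
  unfold volterra. rewrite Hln. nra.
Qed.

(* [|u - 1| = |sqrt u - 1| (sqrt u + 1)] and [sqrt u + 1 < 3] once [|sqrt u - 1| < 1]. *)
Lemma volterra_lt_sq_near u r : 0 < u -> 0 < r <= 1 -> volterra u < r ^ 2 ->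
  Rabs (u - 1) < 3 * r.
Proof.
  intros Hu Hr Hv. pose proof (volterra_ge_sqrt u Hu) as Hs.
  pose proof (sqrt_lt_R0 u Hu) as Hw. pose proof (sqrt_sqrt u ltac:(lra)) as Hww.
  set (w := sqrt u) in *.
  assert (Hw1 : Rabs (w - 1) < r).
  { destruct (Rlt_le_dec (Rabs (w - 1)) r) as [|Hge]; auto.
    rewrite <- pow2_abs in Hs. nra. }
  replace (u - 1) with ((w - 1) * (w + 1)) by (rewrite <- Hww; ring).
  rewrite Rabs_mult, (Rabs_right (w + 1)) by lra.
  assert (w < 2) by (apply Rabs_def2 in Hw1; lra).
  pose proof (Rabs_pos (w - 1)). nra.
Qed.

Lemma volterra_ge_half u : 0 < u -> u / 2 - 1 <= volterra u.
Proof.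
  intros Hu. pose proof (ln_le_sub1 (u / 2) ltac:(lra)) as H.
  pose proof (ln_le_sub1 2 ltac:(lra)).
  unfold Rdiv in H. rewrite ln_mult, ln_Rinv in H by lra.
  unfold volterra; lra.
Qed.

Lemma volterra_sum_prod1 x y z : 0 < x -> 0 < y -> 0 < z -> x * y * z = 1 ->
  volterra x + volterra y + volterra z = x + y + z - 3.
Proof.
  intros Hx Hy Hz Hxyz.
  assert (Hln : ln x + ln y + ln z = 0).
  { rewrite <- !ln_mult by nra. rewrite Hxyz. apply ln_1. }
  unfold volterra; lra.
Qed.

Lemma volterra_ratio_ge p q eps M : 0 < p -> 0 < q <= M -> 0 < eps <= Rabs (p - q) ->
  (Rmin 1 (eps / M) / 3) ^ 2 <= volterra (p / q).
Proof.
  intros Hp Hq Heps. set (r := Rmin 1 (eps / M) / 3).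
  assert (Hr : 0 < r <= 1).
  { pose proof (Rmin_l 1 (eps / M)). split; [|unfold r; lra].
    unfold r. apply Rdiv_lt_0_compat; [apply Rmin_pos; [lra|apply Rdiv_lt_0_compat]|]; lra. }
  apply Rnot_lt_le. intros Hlt.
  pose proof (volterra_lt_sq_near (p / q) r ltac:(apply Rdiv_lt_0_compat; lra) Hr Hlt) as Hnear.
  assert (Hfar : eps / M <= Rabs (p / q - 1)).
  { replace (p / q - 1) with ((p - q) / q) by (field; lra).
    rewrite Rabs_div, (Rabs_right q) by lra.
    apply Rle_trans with (eps / q).
    - apply Rmult_le_compat_l; [lra|]. apply Rinv_le_contravar; lra.
    - apply Rmult_le_compat_r; [left; apply Rinv_0_lt_compat|]; lra. }
  pose proof (Rmin_r 1 (eps / M)). unfold r in Hnear. lra.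
Qed.

Definition vterm (X x : R) : R := X * volterra (x / X).

Lemma vterm_ge0 X x : 0 < X -> 0 < x -> 0 <= vterm X x.
Proof.
  intros HX Hx. apply Rmult_le_pos; [lra|].
  apply volterra_ge0, Rdiv_lt_0_compat; lra.
Qed.

Lemma vterm_le_sq X x r : 0 < X -> Rabs (x - X) <= r <= X / 2 -> vterm X x <= 2 * r ^ 2 / X.
Proof.
  intros HX [Hx Hr]. pose proof Hx as Hbetween. apply Rabs_le_between in Hbetween.
  assert (Hu : 1 / 2 <= x / X) by (apply Rmult_le_reg_r with X; [lra|]; field_simplify; lra).
  pose proof (volterra_le_sq_div (x / X) ltac:(lra)) as Hv.
  assert (Hq : (x / X - 1) ^ 2 / (x / X) <= 2 * (x / X - 1) ^ 2).
  { apply Rmult_le_reg_r with (x / X); [lra|].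
    replace ((x / X - 1) ^ 2 / (x / X) * (x / X)) with ((x / X - 1) ^ 2) by (field; lra).
    pose proof (pow2_ge_0 (x / X - 1)). nra. }
  assert (Hsq : (x - X) ^ 2 <= r ^ 2)
    by (rewrite <- (pow2_abs (x - X)); apply pow_incr; split; [apply Rabs_pos|lra]).
  apply Rle_trans with (X * (2 * (x / X - 1) ^ 2)); [unfold vterm; apply Rmult_le_compat_l; lra|].
  replace (X * (2 * (x / X - 1) ^ 2)) with (2 * (x - X) ^ 2 / X) by (field; lra).
  unfold Rdiv. apply Rmult_le_compat_r; [left; pos|lra].
Qed.

Lemma vterm_lt_near X x r : 0 < X -> 0 < x -> 0 < r <= 1 -> vterm X x < X * r ^ 2 ->
  Rabs (x - X) < 3 * r * X.
Proof.
  intros HX Hx Hr Hv.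
  assert (Hu : 0 < x / X) by (apply Rdiv_lt_0_compat; lra).
  assert (Hw : volterra (x / X) < r ^ 2).
  { apply Rmult_lt_reg_l with X; [lra|]. exact Hv. }
  pose proof (volterra_lt_sq_near _ _ Hu Hr Hw) as Hn.
  replace (x - X) with ((x / X - 1) * X) by (field; lra).
  rewrite Rabs_mult, (Rabs_right X) by lra. apply Rmult_lt_compat_r; lra.
Qed.

Lemma vterm_sublevel X x K : 0 < X -> 0 < x -> vterm X x <= K ->
  X * exp (- (K / X + 1)) <= x <= 2 * (K + X).
Proof.
  intros HX Hx HK.
  assert (Hu : 0 < x / X) by (apply Rdiv_lt_0_compat; lra).
  assert (Hv : volterra (x / X) <= K / X).
  { apply Rmult_le_reg_l with X; [lra|]. unfold vterm in HK.
    replace (X * (K / X)) with K by (field; lra). exact HK. }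
  split.
  - assert (Hln : - (K / X + 1) <= ln (x / X)) by (unfold volterra in Hv; lra).
    assert (Hexp : exp (- (K / X + 1)) <= x / X).
    { rewrite <- (exp_ln (x / X)) by lra.
      destruct Hln as [Hlt|Heq]; [left; apply exp_increasing; lra|rewrite Heq; lra]. }
    replace x with (X * (x / X)) by (field; lra). apply Rmult_le_compat_l; lra.
  - pose proof (volterra_ge_half _ Hu).
    replace x with (X * (x / X)) by (field; lra).
    replace (2 * (K + X)) with (X * (2 * (K / X + 1))) by (field; lra).
    apply Rmult_le_compat_l; lra.
Qed.

Lemma is_derive_vterm X x : 0 < X -> 0 < x -> is_derive (vterm X) x (1 - X / x).
Proof.
  intros HX Hx. unfold vterm, volterra. auto_derive.
  - apply Rdiv_lt_0_compat; lra.
  - field. lra.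
Qed.

Lemma locally_R_ex (P : R -> Prop) x : locally x P ->
  exists delta, 0 < delta /\ forall y, Rabs (y - x) < delta -> P y.
Proof.
  intros [eps Heps]. exists eps. split; [apply cond_pos|].
  intros y Hy. apply Heps. exact Hy.
Qed.

Lemma at_right_R_ex (P : R -> Prop) x : at_right x P ->
  exists delta, 0 < delta /\ forall y, x < y < x + delta -> P y.
Proof.
  intros HP. destruct (locally_R_ex _ _ HP) as [delta [Hd HPd]].
  exists delta. split; [exact Hd|]. intros y Hy. apply HPd; [|lra].
  rewrite Rabs_right; lra.
Qed.

Lemma mvt_closed (f df : R -> R) u v : u <= v ->
  (forall t, u <= t <= v -> is_derive f t (df t)) ->
  exists c, u <= c <= v /\ f v - f u = df c * (v - u).
Proof.
  intros Huv Hd.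
  destruct (MVT_gen f u v df) as [c [Hc Heq]];
    rewrite ?Rmin_left, ?Rmax_right in * by lra.
  - intros t Ht. apply Hd. lra.
  - intros t Ht. apply continuity_pt_filterlim, (ex_derive_continuous f t).
    exists (df t). apply Hd. exact Ht.
  - exists c. split; assumption.
Qed.

Lemma nonincreasing_of_derive_nonpos (f df : R -> R) u v : u <= v ->
  (forall t, u <= t <= v -> is_derive f t (df t) /\ df t <= 0) -> f v <= f u.
Proof.
  intros Huv Hd. destruct (mvt_closed f df u v Huv) as [c [Hc Heq]].
  - intros t Ht. apply Hd, Ht.
  - assert (df c <= 0) by apply Hd, Hc. nra.
Qed.

Lemma le_at_0_of_right_continuous (f : R -> R) t :
  filterlim f (at_right 0) (locally (f 0)) -> 0 < t ->
  (forall s, 0 < s <= t -> f t <= f s) -> f t <= f 0.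
Proof.
  intros Hf Ht Hmon.
  apply (closed_filterlim_loc f (fun y => f t <= y) (f 0) Hf); [|apply closed_ge].
  exists (mkposreal t Ht). intros s Hs Hs0. apply Hmon. split; [exact Hs0|].
  assert (Hst : Rabs (s - 0) < t) by exact Hs. apply Rabs_def2 in Hst. lra.
Qed.

Lemma locally_pos_of_lower_bound (f : R -> R) tau m : 0 < tau -> 0 < m ->
  continuous f tau -> (forall s, 0 < s < tau -> m <= f s) -> locally tau (fun s => 0 < f s).
Proof.
  intros Htau Hm Hf Hlow.
  assert (Hleft : filterlim f (at_left tau) (locally (f tau)))
    by exact (filterlim_filter_le_1 f (filter_le_within _) Hf).
  assert (Hftau : m <= f tau).
  { apply (closed_filterlim_loc f (fun y => m <= y) (f tau) Hleft); [|apply closed_ge].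
    exists (mkposreal tau Htau). intros s Hs Hlt. apply Hlow. split; [|exact Hlt].
    assert (Hst : Rabs (s - tau) < tau) by exact Hs. apply Rabs_def2 in Hst. lra. }
  apply Hf. apply (open_gt 0). lra.
Qed.

Lemma real_continuation (P : R -> Prop) :
  P 0 -> at_right 0 P ->
  (forall tau, 0 < tau -> (forall s, 0 <= s < tau -> P s) -> locally tau P) ->
  forall t, 0 <= t -> P t.
Proof.
  intros HP0 Hright Hstep T HT. apply NNPP. intros HnT.
  set (A := fun tau => 0 <= tau /\ forall s, 0 <= s < tau -> P s).
  destruct (completeness A) as [sup [Hub Hlub]].
  - exists T. intros tau [_ Htau]. apply Rnot_lt_le. intros Hlt. apply HnT, Htau. lra.
  - exists 0. split; [lra|]. intros s Hs. lra.
  - assert (Hsup0 : 0 <= sup) by (apply Hub; split; [lra|intros s Hs; lra]).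
    assert (Hbelow : forall s, 0 <= s < sup -> P s).
    { intros s Hs. apply NNPP. intros Hns. assert (sup <= s); [|lra].
      apply Hlub. intros tau [_ Htau]. apply Rnot_lt_le. intros Hlt.
      apply Hns, Htau. lra. }
    assert (Hnext : exists eps, 0 < eps /\ forall s, sup <= s < sup + eps -> P s).
    { destruct (Req_dec sup 0) as [Hz|Hnz].
      - destruct (at_right_R_ex P 0 Hright) as [eps [He HPe]]. exists eps.
        split; [exact He|]. intros s Hs.
        destruct (Req_dec s 0) as [->|Hs0]; [exact HP0|apply HPe; lra].
      - destruct (locally_R_ex P sup (Hstep sup ltac:(lra) Hbelow)) as [eps [He HPe]].
        exists eps. split; [exact He|]. intros s Hs. apply HPe.
        rewrite Rabs_right; lra. }
    destruct Hnext as [eps [He HPe]].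
    assert (sup + eps <= sup); [|lra].
    apply Hub. split; [lra|]. intros s Hs.
    destruct (Rlt_le_dec s sup); [apply Hbelow|apply HPe]; lra.
Qed.

Lemma nonincreasing_bounded_has_lim (f : R -> R) m :
  (forall s t, 0 < s <= t -> f t <= f s) -> (forall t, 0 < t -> m <= f t) ->
  exists l : R, is_lim f p_infty l.
Proof.
  intros Hmon Hbnd.
  destruct (completeness (fun y => exists t, 0 < t /\ y = - f t)) as [l [Hub Hlub]].
  - exists (- m). intros y [t [Ht ->]]. specialize (Hbnd t Ht). lra.
  - exists (- f 1), 1. split; lra.
  - exists (- l). apply is_lim_spec. intros eps.
    assert (Ht0 : exists t0, 0 < t0 /\ l - eps < - f t0).
    { apply NNPP. intros Hn. assert (l <= l - eps) by (apply Hlub; intros y [t [Ht ->]];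
        apply Rnot_lt_le; intros Hlt; apply Hn; exists t; split; assumption).
      pose proof (cond_pos eps). lra. }
    destruct Ht0 as [t0 [Ht0 Hlt]]. exists t0. intros t Ht.
    assert (- f t <= l) by (apply Hub; exists t; split; [lra|reflexivity]).
    assert (f t <= f t0) by (apply Hmon; lra).
    apply Rabs_def1; lra.
Qed.

Lemma lipschitz_of_derive_bounded (f df : R -> R) u v L : u <= v ->
  (forall t, u <= t <= v -> is_derive f t (df t) /\ Rabs (df t) <= L) ->
  Rabs (f v - f u) <= L * (v - u).
Proof.
  intros Huv Hd. destruct (mvt_closed f df u v Huv) as [c [Hc Heq]].
  - intros t Ht. apply Hd, Ht.
  - rewrite Heq, Rabs_mult, (Rabs_right (v - u)) by lra.
    apply Rmult_le_compat_r; [lra|apply Hd, Hc].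
Qed.

(* Quantitative Barbalat lemma: while the Lipschitz [h] stays away from 0, so does [dH],
   and a convergent [H] cannot keep moving at a definite rate. *)
Lemma barbalat (H dH h dh : R -> R) (l L : R) :
  (forall t, 0 < t -> is_derive H t (dH t)) ->
  (forall t, 0 < t -> is_derive h t (dh t) /\ Rabs (dh t) <= L) ->
  (forall eps, 0 < eps -> exists kappa, 0 < kappa /\
     forall t, 0 < t -> eps <= Rabs (h t) -> kappa <= Rabs (dH t)) ->
  is_lim H p_infty l -> is_lim h p_infty 0.
Proof.
  intros HdH Hdh Hrate HH. apply is_lim_spec. intros [eps Heps]. simpl.
  destruct (Hrate (eps / 2) ltac:(lra)) as [kappa [Hk Hkappa]].
  set (L' := Rabs L + 1).
  assert (HL' : 0 < L') by (pose proof (Rabs_pos L); unfold L'; lra).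
  set (delta := eps / (2 * L')).
  assert (Hdelta : 0 < delta) by (apply Rdiv_lt_0_compat; lra).
  apply is_lim_spec in HH.
  destruct (HH (mkposreal (kappa * delta / 2) ltac:(simpl; nra))) as [T HT]. simpl in HT.
  exists (Rmax T 0). intros t Ht. rewrite Rminus_0_r.
  pose proof (Rmax_l T 0). pose proof (Rmax_r T 0).
  apply Rnot_le_lt. intros Hbig.
  assert (Hstay : forall s, t <= s <= t + delta -> eps / 2 <= Rabs (h s)).
  { intros s Hs.
    assert (Hlip : Rabs (h s - h t) <= L' * (s - t)).
    { apply lipschitz_of_derive_bounded with dh; [lra|]. intros x Hx.
      destruct (Hdh x ltac:(lra)) as [Hd Hb]. split; [exact Hd|].
      pose proof (Rle_abs L). unfold L'; lra. }
    assert (L' * (s - t) <= eps / 2).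
    { apply Rle_trans with (L' * delta); [apply Rmult_le_compat_l; lra|].
      unfold delta. right. field. lra. }
    pose proof (Rabs_triang_inv (h t) (h t - h s)) as Htri.
    replace (h t - (h t - h s)) with (h s) in Htri by ring.
    rewrite Rabs_minus_sym in Hlip. lra. }
  destruct (mvt_closed H dH t (t + delta)) as [c [Hc Heq]]; [lra| |].
  { intros x Hx. apply HdH. lra. }
  assert (Hkc : kappa <= Rabs (dH c)) by (apply Hkappa; [lra|apply Hstay; lra]).
  assert (Hclose : Rabs (H (t + delta) - H t) < kappa * delta).
  { pose proof (HT t ltac:(lra)). pose proof (HT (t + delta) ltac:(lra)).
    replace (H (t + delta) - H t) with ((H (t + delta) - l) - (H t - l)) by ring.
    eapply Rle_lt_trans; [apply Rabs_triang|]. rewrite Rabs_Ropp. lra. }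
  rewrite Heq, Rabs_mult, (Rabs_right (t + delta - t)) in Hclose by lra.
  replace (t + delta - t) with delta in Hclose by ring. nra.
Qed.

Lemma Derive_of_is_derive (f : R -> R) x l : is_derive f x l -> Derive (fun y => f y) x = l.
Proof. apply is_derive_unique. Qed.

Lemma Rabs_le_dist3 x1 x2 x3 y1 y2 y3 :
  Rabs (x1 - y1) <= dist3 x1 x2 x3 y1 y2 y3 /\ Rabs (x2 - y2) <= dist3 x1 x2 x3 y1 y2 y3 /\
  Rabs (x3 - y3) <= dist3 x1 x2 x3 y1 y2 y3.
Proof.
  unfold dist3. pose proof (pow2_ge_0 (x1 - y1)). pose proof (pow2_ge_0 (x2 - y2)).
  pose proof (pow2_ge_0 (x3 - y3)).
  repeat split; match goal with |- Rabs ?x <= _ =>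
    rewrite <- (sqrt_pow2 (Rabs x)), pow2_abs by apply Rabs_pos end;
    apply sqrt_le_1_alt; lra.
Qed.

Lemma dist3_le_sum x1 x2 x3 y1 y2 y3 :
  dist3 x1 x2 x3 y1 y2 y3 <= Rabs (x1 - y1) + Rabs (x2 - y2) + Rabs (x3 - y3).
Proof.
  unfold dist3. pose proof (Rabs_pos (x1 - y1)). pose proof (Rabs_pos (x2 - y2)).
  pose proof (Rabs_pos (x3 - y3)).
  rewrite <- (sqrt_pow2 (Rabs (x1 - y1) + Rabs (x2 - y2) + Rabs (x3 - y3))) by lra.
  apply sqrt_le_1_alt.
  rewrite <- (pow2_abs (x1 - y1)), <- (pow2_abs (x2 - y2)), <- (pow2_abs (x3 - y3)). nra.
Qed.

Section SEI.

Variables Lam b d a sg g Ss Es Is : R.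
Hypotheses (Hb : 0 < b) (Hd : 0 < d) (Ha : 0 < a) (Hsg : 0 < sg)
  (HSs : 0 < Ss) (HEs : 0 < Es) (HIs : 0 < Is).
Hypotheses (HeqS : Lam = b * Ss * Is + d * Ss) (HeqE : b * Ss * Is = a * Es)
  (HeqI : sg * Es = g * Is).

Definition sei_fS (s e i : R) : R := Lam - b * s * i - d * s.
Definition sei_fE (s e i : R) : R := b * s * i - a * e.
Definition sei_fI (s e i : R) : R := sg * e - g * i.

Definition sei_solution (S E I : R -> R) : Prop :=
  (forall t, 0 < t ->
     is_derive S t (sei_fS (S t) (E t) (I t)) /\
     is_derive E t (sei_fE (S t) (E t) (I t)) /\
     is_derive I t (sei_fI (S t) (E t) (I t))) /\
  filterlim S (at_right 0) (locally (S 0)) /\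
  filterlim E (at_right 0) (locally (E 0)) /\
  filterlim I (at_right 0) (locally (I 0)).

(* The weight [a / sg] cancels the terms linear in [e] from the derivative. *)
Definition lyap (s e i : R) : R := vterm Ss s + vterm Es e + a / sg * vterm Is i.

Definition dissipation (s e i : R) : R :=
  d * (s - Ss) ^ 2 / s + b * Ss * Is *
    (volterra (Ss / s) + volterra (s * i * Es / (Ss * Is * e)) + volterra (e * Is / (Es * i))).

(* The three ratios in [dissipation] have product 1, so their logarithms cancel
   ([volterra_sum_prod1]) and the identity becomes rational. *)
Lemma lyap_rate s e i : 0 < s -> 0 < e -> 0 < i ->
  (1 - Ss / s) * sei_fS s e i + (1 - Es / e) * sei_fE s e i
    + a / sg * ((1 - Is / i) * sei_fI s e i) = - dissipation s e i.
Proof.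
  intros Hs He Hi. unfold dissipation.
  assert (Hg : g = sg * Es / Is) by (field_simplify_eq; lra).
  assert (Ha' : a = b * Ss * Is / Es) by (field_simplify_eq; lra).
  rewrite volterra_sum_prod1; [|pos|pos|pos|field; repeat split; lra].
  unfold sei_fS, sei_fE, sei_fI. rewrite HeqS, Hg, Ha'. field. repeat split; lra.
Qed.

Lemma dissipation_ge s e i : 0 < s -> 0 < e -> 0 < i ->
  d * (s - Ss) ^ 2 / s <= dissipation s e i /\
  b * Ss * Is * volterra (e * Is / (Es * i)) <= dissipation s e i.
Proof.
  intros Hs He Hi. unfold dissipation.
  assert (0 < b * Ss * Is) by pos.
  assert (0 <= d * (s - Ss) ^ 2 / s)
    by (apply Rdiv_le_0_compat; [apply Rmult_le_pos; [lra|apply pow2_ge_0]|lra]).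
  pose proof (volterra_ge0 (Ss / s) ltac:(pos)).
  pose proof (volterra_ge0 (s * i * Es / (Ss * Is * e)) ltac:(pos)).
  pose proof (volterra_ge0 (e * Is / (Es * i)) ltac:(pos)).
  split; nra.
Qed.

Lemma lyap_sublevel_bounded K : exists m M, 0 < m /\
  forall s e i, 0 < s -> 0 < e -> 0 < i -> lyap s e i <= K ->
  (m <= s <= M) /\ (m <= e <= M) /\ (m <= i <= M).
Proof.
  set (c := a / sg). assert (Hc : 0 < c) by (unfold c; pos).
  set (lowS := Ss * exp (- (K / Ss + 1))). set (lowE := Es * exp (- (K / Es + 1))).
  set (lowI := Is * exp (- (K / c / Is + 1))).
  exists (Rmin lowS (Rmin lowE lowI)),
    (Rmax (2 * (K + Ss)) (Rmax (2 * (K + Es)) (2 * (K / c + Is)))).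
  split; [unfold lowS, lowE, lowI; repeat apply Rmin_pos; pos; apply exp_pos|].
  intros s e i Hs He Hi HK.
  pose proof (vterm_ge0 Ss s HSs Hs). pose proof (vterm_ge0 Es e HEs He).
  pose proof (vterm_ge0 Is i HIs Hi).
  unfold lyap in HK. fold c in HK.
  assert (0 <= c * vterm Is i) by (apply Rmult_le_pos; lra).
  assert (HKI : vterm Is i <= K / c).
  { apply Rmult_le_reg_l with c; [exact Hc|].
    replace (c * (K / c)) with K by (field; lra). lra. }
  destruct (vterm_sublevel Ss s K HSs Hs ltac:(lra)).
  destruct (vterm_sublevel Es e K HEs He ltac:(lra)).
  destruct (vterm_sublevel Is i (K / c) HIs Hi HKI).
  pose proof (Rmin_l lowS (Rmin lowE lowI)). pose proof (Rmin_r lowS (Rmin lowE lowI)).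
  pose proof (Rmin_l lowE lowI). pose proof (Rmin_r lowE lowI).
  pose proof (Rmax_l (2 * (K + Ss)) (Rmax (2 * (K + Es)) (2 * (K / c + Is)))).
  pose proof (Rmax_r (2 * (K + Ss)) (Rmax (2 * (K + Es)) (2 * (K / c + Is)))).
  pose proof (Rmax_l (2 * (K + Es)) (2 * (K / c + Is))).
  pose proof (Rmax_r (2 * (K + Es)) (2 * (K / c + Is))).
  unfold lowS, lowE, lowI in *. repeat split; lra.
Qed.

Section Trajectory.

Variables S E I : R -> R.
Hypothesis Hsol : sei_solution S E I.
Hypotheses (HS0 : 0 < S 0) (HE0 : 0 < E 0) (HI0 : 0 < I 0).

Lemma lyap_is_derive t : 0 < t -> 0 < S t -> 0 < E t -> 0 < I t ->
  is_derive (fun t => lyap (S t) (E t) (I t)) t (- dissipation (S t) (E t) (I t)).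
Proof.
  intros Ht HS HE HI. destruct (proj1 Hsol t Ht) as (DS & DE & DI).
  rewrite <- lyap_rate by assumption. unfold lyap, vterm, volterra. auto_derive.
  - repeat split; try (eexists; eassumption); pos.
  - rewrite (Derive_of_is_derive _ _ _ DS), (Derive_of_is_derive _ _ _ DE),
      (Derive_of_is_derive _ _ _ DI).
    field. repeat split; lra.
Qed.

Lemma lyap_right_continuous :
  filterlim (fun t => lyap (S t) (E t) (I t)) (at_right 0) (locally (lyap (S 0) (E 0) (I 0))).
Proof.
  pose proof Hsol as (_ & RS & RE & RI).
  assert (Hcomp : forall (phi x : R -> R), ex_derive phi (x 0) ->
    filterlim x (at_right 0) (locally (x 0)) ->
    filterlim (fun t => phi (x t)) (at_right 0) (locally (phi (x 0)))).
  { intros phi x Hphi Rx.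
    exact (filterlim_comp _ _ _ x phi _ _ _ Rx (ex_derive_continuous phi _ Hphi)). }
  assert (Hv : forall X x, 0 < X -> 0 < x -> ex_derive (vterm X) x)
    by (intros X x HX Hx; eexists; apply is_derive_vterm; assumption).
  unfold lyap.
  pose proof (@filterlim_plus R_AbsRing R_NormedModule) as Hplus.
  eapply filterlim_comp_2; [eapply filterlim_comp_2| |apply Hplus].
  - apply Hcomp; [apply Hv|]; assumption.
  - apply Hcomp; [apply Hv|]; assumption.
  - apply Hplus.
  - apply (Hcomp (fun y => a / sg * vterm Is y)); [apply ex_derive_scal, Hv|]; assumption.
Qed.

Lemma lyap_nonincreasing_of_pos u v : 0 < u <= v ->
  (forall t, u <= t <= v -> 0 < S t /\ 0 < E t /\ 0 < I t) ->
  lyap (S v) (E v) (I v) <= lyap (S u) (E u) (I u).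
Proof.
  intros Huv Hpos.
  apply (nonincreasing_of_derive_nonpos (fun t => lyap (S t) (E t) (I t))
    (fun t => - dissipation (S t) (E t) (I t))); [lra|].
  intros t Ht. destruct (Hpos t Ht) as (HS & HE & HI). split.
  - apply lyap_is_derive; lra.
  - destruct (dissipation_ge (S t) (E t) (I t) HS HE HI) as [Hdis _].
    assert (0 <= d * (S t - Ss) ^ 2 / S t)
      by (apply Rdiv_le_0_compat; [apply Rmult_le_pos; [lra|apply pow2_ge_0]|lra]).
    lra.
Qed.

Lemma lyap_le_initial_of_pos t : 0 <= t ->
  (forall s, 0 < s <= t -> 0 < S s /\ 0 < E s /\ 0 < I s) ->
  lyap (S t) (E t) (I t) <= lyap (S 0) (E 0) (I 0).
Proof.
  intros Ht Hpos. destruct (Req_dec t 0) as [->|Ht0]; [lra|].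
  apply (le_at_0_of_right_continuous (fun t => lyap (S t) (E t) (I t)));
    [exact lyap_right_continuous|lra|].
  intros s Hs. apply lyap_nonincreasing_of_pos; [lra|]. intros u Hu. apply Hpos. lra.
Qed.

(* Before the first zero of a component, [lyap] stays below its initial value, which
   keeps every component above a positive constant. *)
Lemma sei_solution_pos : forall t, 0 <= t -> 0 < S t /\ 0 < E t /\ 0 < I t.
Proof.
  pose proof Hsol as (Hder & RS & RE & RI).
  destruct (lyap_sublevel_bounded (lyap (S 0) (E 0) (I 0))) as (m & M & Hm & Hbnd).
  apply real_continuation; [tauto| |].
  - repeat apply filter_and; [apply RS|apply RE|apply RI]; apply (open_gt 0); assumption.
  - intros tau Htau Hbefore.
    assert (Hlow : forall s, 0 < s < tau -> m <= S s /\ m <= E s /\ m <= I s).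
    { intros s Hs. destruct (Hbefore s ltac:(lra)) as (HS & HE & HI).
      destruct (Hbnd (S s) (E s) (I s) HS HE HI) as (BS & BE & BI); [|lra].
      apply lyap_le_initial_of_pos; [lra|]. intros u Hu. apply Hbefore. lra. }
    destruct (Hder tau Htau) as (DS & DE & DI).
    repeat apply filter_and; apply (locally_pos_of_lower_bound _ tau m Htau Hm);
      try (apply (ex_derive_continuous (V := R_NormedModule)); eexists; eassumption);
      intros s Hs; apply Hlow, Hs.
Qed.

Lemma lyap_nonincreasing u v : 0 < u <= v ->
  lyap (S v) (E v) (I v) <= lyap (S u) (E u) (I u).
Proof.
  intros Huv. apply lyap_nonincreasing_of_pos; [lra|].
  intros t Ht. apply sei_solution_pos. lra.
Qed.

Lemma lyap_le_initial t : 0 <= t -> lyap (S t) (E t) (I t) <= lyap (S 0) (E 0) (I 0).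
Proof.
  intros Ht. apply lyap_le_initial_of_pos; [lra|].
  intros s Hs. apply sei_solution_pos. lra.
Qed.

Lemma sei_solution_bounded : exists M, 0 < M /\
  forall t, 0 <= t -> S t <= M /\ E t <= M /\ I t <= M.
Proof.
  destruct (lyap_sublevel_bounded (lyap (S 0) (E 0) (I 0))) as (m & M & Hm & Hbnd).
  exists M. split.
  - destruct (Hbnd (S 0) (E 0) (I 0)) as (B & _); auto using Rle_refl. lra.
  - intros t Ht. destruct (sei_solution_pos t Ht) as (HS & HE & HI).
    destruct (Hbnd (S t) (E t) (I t) HS HE HI (lyap_le_initial t Ht)) as (BS & BE & BI).
    repeat split; apply BS || apply BE || apply BI.
Qed.

Lemma sei_field_bounded : exists M B, 0 < M /\ forall t, 0 <= t ->
  (0 < S t <= M /\ 0 < E t <= M /\ 0 < I t <= M) /\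
  (Rabs (sei_fS (S t) (E t) (I t)) <= B /\ Rabs (sei_fE (S t) (E t) (I t)) <= B /\
   Rabs (sei_fI (S t) (E t) (I t)) <= B).
Proof.
  destruct sei_solution_bounded as (M & HM & Hbnd).
  assert (Hg : 0 < g) by (apply (Rmult_lt_reg_r Is); [lra|]; rewrite Rmult_0_l, <- HeqI; pos).
  exists M, (Lam + b * M * M + d * M + a * M + sg * M + g * M). split; [exact HM|].
  intros t Ht. destruct (sei_solution_pos t Ht) as (HS & HE & HI).
  destruct (Hbnd t Ht) as (BS & BE & BI).
  split; [tauto|]. unfold sei_fS, sei_fE, sei_fI.
  assert (0 < Lam) by (rewrite HeqS; apply Rplus_lt_0_compat; pos).
  assert (S t * I t <= M * M) by (apply Rmult_le_compat; lra).
  assert (0 <= b * S t * I t <= b * M * M)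
    by (rewrite !Rmult_assoc; split; [left; pos|apply Rmult_le_compat_l; lra]).
  assert (0 <= d * S t <= d * M) by (split; [left; pos|apply Rmult_le_compat_l; lra]).
  assert (0 <= a * E t <= a * M) by (split; [left; pos|apply Rmult_le_compat_l; lra]).
  assert (0 <= sg * E t <= sg * M) by (split; [left; pos|apply Rmult_le_compat_l; lra]).
  assert (0 <= g * I t <= g * M) by (split; [left; pos|apply Rmult_le_compat_l; lra]).
  repeat split; apply Rabs_le; split; lra.
Qed.

Lemma lyap_has_lim : exists l : R, is_lim (fun t => lyap (S t) (E t) (I t)) p_infty l.
Proof.
  apply (nonincreasing_bounded_has_lim _ 0); [exact lyap_nonincreasing|].
  intros t Ht. destruct (sei_solution_pos t ltac:(lra)) as (HS & HE & HI).
  pose proof (vterm_ge0 Ss (S t) HSs HS). pose proof (vterm_ge0 Es (E t) HEs HE).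
  pose proof (vterm_ge0 Is (I t) HIs HI).
  assert (0 <= a / sg * vterm Is (I t)) by (apply Rmult_le_pos; [left; pos|lra]).
  unfold lyap. lra.
Qed.

Lemma sei_S_lim : is_lim S p_infty Ss.
Proof.
  destruct sei_field_bounded as (M & B & HM & Hbnd).
  destruct lyap_has_lim as [l Hl].
  assert (Hh : is_lim (fun t => S t - Ss) p_infty 0).
  { apply (barbalat (fun t => lyap (S t) (E t) (I t))
      (fun t => - dissipation (S t) (E t) (I t)) (fun t => S t - Ss)
      (fun t => sei_fS (S t) (E t) (I t)) l B); [| | |exact Hl].
    - intros t Ht. destruct (Hbnd t ltac:(lra)) as ((HS & HE & HI) & _).
      apply lyap_is_derive; tauto.
    - intros t Ht. destruct (proj1 Hsol t Ht) as (DS & _).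
      split; [|apply (Hbnd t ltac:(lra))].
      auto_derive; [eexists; exact DS|]. rewrite (Derive_of_is_derive _ _ _ DS). ring.
    - intros eps Heps. exists (d * eps ^ 2 / M). split; [pos|].
      intros t Ht Hfar. destruct (Hbnd t ltac:(lra)) as ((HS & HE & HI) & _).
      destruct (dissipation_ge (S t) (E t) (I t)) as [Hdis _]; try tauto.
      rewrite Rabs_Ropp. apply Rle_trans with (2 := Rle_abs _), Rle_trans with (2 := Hdis).
      assert (Hsq : eps ^ 2 <= (S t - Ss) ^ 2)
        by (rewrite <- (pow2_abs (S t - Ss)); apply pow_incr; lra).
      unfold Rdiv. rewrite !Rmult_assoc. apply Rmult_le_compat_l; [lra|].
      apply Rmult_le_compat; [apply pow2_ge_0|left; pos|exact Hsq|].
      apply Rinv_le_contravar; lra. }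
  replace (Finite Ss) with (Finite (0 + Ss)) by (f_equal; ring).
  apply (is_lim_ext (fun t => (S t - Ss) + Ss)); [intros t; ring|].
  apply is_lim_plus'; [exact Hh|apply is_lim_const].
Qed.

Lemma sei_EI_balance_lim : is_lim (fun t => E t * Is - Es * I t) p_infty 0.
Proof.
  destruct sei_field_bounded as (M & B & HM & Hbnd).
  destruct lyap_has_lim as [l Hl].
  apply (barbalat (fun t => lyap (S t) (E t) (I t))
    (fun t => - dissipation (S t) (E t) (I t)) (fun t => E t * Is - Es * I t)
    (fun t => sei_fE (S t) (E t) (I t) * Is - Es * sei_fI (S t) (E t) (I t))
    l (B * Is + Es * B)); [| | |exact Hl].
  - intros t Ht. destruct (Hbnd t ltac:(lra)) as ((HS & HE & HI) & _).
    apply lyap_is_derive; tauto.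
  - intros t Ht. destruct (proj1 Hsol t Ht) as (_ & DE & DI).
    destruct (Hbnd t ltac:(lra)) as (_ & _ & BE & BI).
    apply Rabs_le_between in BE, BI. split.
    + auto_derive; [repeat split; eexists; eassumption|].
      rewrite (Derive_of_is_derive _ _ _ DE), (Derive_of_is_derive _ _ _ DI). ring.
    + apply Rabs_le. split; nra.
  - intros eps Heps. exists (b * Ss * Is * (Rmin 1 (eps / (Es * M)) / 3) ^ 2).
    split; [pos; apply Rmin_pos; pos|].
    intros t Ht Hfar. destruct (Hbnd t ltac:(lra)) as ((HS & HE & HI) & _).
    destruct (dissipation_ge (S t) (E t) (I t)) as [_ Hdis]; try tauto.
    rewrite Rabs_Ropp. apply Rle_trans with (2 := Rle_abs _), Rle_trans with (2 := Hdis).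
    apply Rmult_le_compat_l; [left; pos|].
    apply volterra_ratio_ge; [pos|split; [pos|apply Rmult_le_compat_l; lra]|lra].
Qed.

Lemma sei_fS_lim : is_lim (fun t => sei_fS (S t) (E t) (I t)) p_infty 0.
Proof.
  destruct sei_field_bounded as (M & B & HM & Hbnd).
  apply (barbalat S (fun t => sei_fS (S t) (E t) (I t)) (fun t => sei_fS (S t) (E t) (I t))
    (fun t => - b * (sei_fS (S t) (E t) (I t) * I t + S t * sei_fI (S t) (E t) (I t))
              - d * sei_fS (S t) (E t) (I t))
    Ss (b * (B * M + M * B) + d * B)); [| | |exact sei_S_lim].
  - intros t Ht. apply (proj1 Hsol t Ht).
  - intros t Ht. destruct (proj1 Hsol t Ht) as (DS & _ & DI).
    destruct (Hbnd t ltac:(lra)) as ((HS & HE & HI) & BS & _ & BI).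
    apply Rabs_le_between in BS, BI. split.
    + unfold sei_fS at 1. auto_derive; [repeat split; eexists; eassumption|].
      rewrite (Derive_of_is_derive _ _ _ DS), (Derive_of_is_derive _ _ _ DI).
      unfold sei_fS, sei_fI. ring.
    + set (x := sei_fS (S t) (E t) (I t)) in *. set (y := sei_fI (S t) (E t) (I t)) in *.
      assert (0 <= B) by lra.
      assert (- (B * M) <= x * I t <= B * M) by (split; nra).
      assert (- (M * B) <= S t * y <= M * B) by (split; nra).
      apply Rabs_le. split; nra.
  - intros eps Heps. exists eps. split; [exact Heps|]. intros t _ Hfar. exact Hfar.
Qed.

Lemma sei_I_lim : is_lim I p_infty Is.
Proof.
  apply (is_lim_ext_loc (fun t => (Lam - d * S t - sei_fS (S t) (E t) (I t)) / (b * S t))).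
  { exists 0. intros t Ht. destruct (sei_solution_pos t ltac:(lra)) as (HS & _).
    unfold sei_fS. field. lra. }
  replace (Finite Is) with (Rbar_div (Lam - d * Ss - 0) (b * Ss))
    by (simpl; f_equal; rewrite HeqS; field; lra).
  apply is_lim_div.
  - apply is_lim_minus'; [apply is_lim_minus'|exact sei_fS_lim].
    + apply is_lim_const.
    + apply (is_lim_scal_l S d p_infty Ss), sei_S_lim.
  - apply (is_lim_scal_l S b p_infty Ss), sei_S_lim.
  - intros Heq. apply Rbar_finite_eq in Heq. nra.
  - exact Logic.I.
Qed.

Lemma sei_E_lim : is_lim E p_infty Es.
Proof.
  apply (is_lim_ext (fun t => / Is * ((E t * Is - Es * I t) + Es * I t))).
  { intros t. field. lra. }
  replace (Finite Es) with (Rbar_mult (/ Is) (0 + Es * Is)) by (simpl; f_equal; field; lra).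
  apply is_lim_scal_l, is_lim_plus'; [exact sei_EI_balance_lim|].
  apply (is_lim_scal_l I Es p_infty Is), sei_I_lim.
Qed.

Lemma sei_solution_converges :
  is_lim S p_infty Ss /\ is_lim E p_infty Es /\ is_lim I p_infty Is.
Proof. split; [|split]; [exact sei_S_lim|exact sei_E_lim|exact sei_I_lim]. Qed.

End Trajectory.

Lemma lyap_small_near_equilibrium eta : 0 < eta -> exists delta, 0 < delta /\
  forall s e i, dist3 s e i Ss Es Is < delta -> 0 < s /\ 0 < e /\ 0 < i /\ lyap s e i < eta.
Proof.
  intros Heta. set (K := 2 * (/ Ss + / Es + a / sg / Is)).
  assert (HK : 0 < K) by (unfold K; assert (0 < a / sg / Is) by pos;
    assert (0 < / Ss) by pos; assert (0 < / Es) by pos; lra).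
  set (m := Rmin Ss (Rmin Es Is) / 2).
  assert (Hm : m <= Ss / 2 /\ m <= Es / 2 /\ m <= Is / 2).
  { pose proof (Rmin_l Ss (Rmin Es Is)). pose proof (Rmin_r Ss (Rmin Es Is)).
    pose proof (Rmin_l Es Is). pose proof (Rmin_r Es Is). unfold m. lra. }
  exists (Rmin m (Rmin 1 (eta / (K + 1)))).
  assert (Hm0 : 0 < m) by (unfold m; apply Rdiv_lt_0_compat; [repeat apply Rmin_pos|]; lra).
  split; [apply Rmin_pos; [exact Hm0|apply Rmin_pos; [lra|pos]]|].
  intros s e i Hdist. set (r := dist3 s e i Ss Es Is) in *.
  pose proof (Rmin_l m (Rmin 1 (eta / (K + 1)))).
  pose proof (Rmin_r m (Rmin 1 (eta / (K + 1)))).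
  pose proof (Rmin_l 1 (eta / (K + 1))). pose proof (Rmin_r 1 (eta / (K + 1))).
  destruct (Rabs_le_dist3 s e i Ss Es Is) as (DS & DE & DI). fold r in DS, DE, DI.
  pose proof (vterm_le_sq Ss s r HSs ltac:(split; [exact DS|lra])).
  pose proof (vterm_le_sq Es e r HEs ltac:(split; [exact DE|lra])).
  pose proof (vterm_le_sq Is i r HIs ltac:(split; [exact DI|lra])).
  apply Rabs_le_between in DS, DE, DI.
  repeat split; try lra.
  assert (Hr : r * K < eta).
  { apply Rle_lt_trans with (eta / (K + 1) * K); [apply Rmult_le_compat_r; lra|].
    apply Rmult_lt_reg_r with (K + 1); [lra|].
    replace (eta / (K + 1) * K * (K + 1)) with (eta * K) by (field; lra). nra. }
  assert (0 <= r) by (unfold r, dist3; apply sqrt_pos).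
  assert (Hlyap : lyap s e i <= r ^ 2 * K).
  { unfold lyap, K. assert (a / sg * vterm Is i <= a / sg * (2 * r ^ 2 / Is))
      by (apply Rmult_le_compat_l; [left; pos|lra]).
    replace (r ^ 2 * (2 * (/ Ss + / Es + a / sg / Is))) with
      (2 * r ^ 2 / Ss + 2 * r ^ 2 / Es + a / sg * (2 * r ^ 2 / Is)) by (field; lra). lra. }
  assert (r ^ 2 * K <= r * K) by (apply Rmult_le_compat_r; nra). lra.
Qed.

Lemma near_equilibrium_of_lyap_small eps : 0 < eps -> exists eta, 0 < eta /\
  forall s e i, 0 < s -> 0 < e -> 0 < i -> lyap s e i < eta -> dist3 s e i Ss Es Is < eps.
Proof.
  intros Heps. set (c := a / sg). assert (Hc : 0 < c) by (unfold c; pos).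
  set (r := Rmin 1 (eps / (3 * (Ss + Es + Is)))).
  assert (Hr : 0 < r <= 1) by (split; [apply Rmin_pos; pos|apply Rmin_l]).
  assert (Hr3 : 3 * r * (Ss + Es + Is) <= eps).
  { pose proof (Rmin_r 1 (eps / (3 * (Ss + Es + Is)))). fold r in H.
    apply Rmult_le_compat_r with (r := 3 * (Ss + Es + Is)) in H; [|lra].
    replace (eps / (3 * (Ss + Es + Is)) * (3 * (Ss + Es + Is))) with eps in H
      by (field; lra). lra. }
  set (w := Rmin Ss (Rmin Es (c * Is))).
  assert (Hw : 0 < w /\ w <= Ss /\ w <= Es /\ w <= c * Is).
  { pose proof (Rmin_l Ss (Rmin Es (c * Is))). pose proof (Rmin_r Ss (Rmin Es (c * Is))).
    pose proof (Rmin_l Es (c * Is)). pose proof (Rmin_r Es (c * Is)).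
    repeat split; try (unfold w; lra). unfold w. repeat apply Rmin_pos; pos. }
  exists (w * r ^ 2). split; [pos|].
  intros s e i Hs He Hi Hlyap.
  pose proof (vterm_ge0 Ss s HSs Hs). pose proof (vterm_ge0 Es e HEs He).
  pose proof (vterm_ge0 Is i HIs Hi).
  assert (0 <= c * vterm Is i) by (apply Rmult_le_pos; lra).
  assert (0 <= r ^ 2) by apply pow2_ge_0. unfold lyap in Hlyap. fold c in Hlyap.
  assert (NS : Rabs (s - Ss) < 3 * r * Ss) by (apply vterm_lt_near; nra).
  assert (NE : Rabs (e - Es) < 3 * r * Es) by (apply vterm_lt_near; nra).
  assert (NI : Rabs (i - Is) < 3 * r * Is).
  { apply vterm_lt_near; try lra. apply Rmult_lt_reg_l with c; [lra|]. nra. }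
  pose proof (dist3_le_sum s e i Ss Es Is). nra.
Qed.

Lemma sei_stable eps : 0 < eps -> exists delta, 0 < delta /\
  forall S E I, sei_solution S E I -> dist3 (S 0) (E 0) (I 0) Ss Es Is < delta ->
  forall t, 0 <= t -> dist3 (S t) (E t) (I t) Ss Es Is < eps.
Proof.
  intros Heps.
  destruct (near_equilibrium_of_lyap_small eps Heps) as (eta & Heta & Hnear).
  destruct (lyap_small_near_equilibrium eta Heta) as (delta & Hdelta & Hsmall).
  exists delta. split; [exact Hdelta|].
  intros S E I Hsol Hdist t Ht.
  destruct (Hsmall _ _ _ Hdist) as (HS0 & HE0 & HI0 & Hlyap0).
  destruct (sei_solution_pos S E I Hsol HS0 HE0 HI0 t Ht) as (HS & HE & HI).
  apply Hnear; try assumption.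
  eapply Rle_lt_trans; [apply lyap_le_initial|]; eassumption.
Qed.

End SEI.

Lemma endemic_equilibrium_pos N mu beta sigma gamma p rho :
  0 < N -> 0 < mu -> 0 < beta -> 0 < sigma -> 0 < gamma -> 0 < p -> 0 < rho < 1 ->
  basic_R0 N mu beta sigma gamma p rho > 1 ->
  0 < Se N mu beta sigma gamma rho /\ 0 < Ee N mu beta sigma gamma p rho /\
  0 < Ie N mu beta sigma gamma p rho.
Proof.
  intros HN Hmu Hbeta Hsigma Hgamma Hp Hrho HR0.
  assert (0 < mu * N) by pos.
  assert (Hden : 0 < (sigma + mu) * (gamma + mu) * (p + mu * N)) by pos.
  assert (HIe : 0 < Ie N mu beta sigma gamma p rho).
  { unfold basic_R0 in HR0. unfold Ie. apply Rdiv_lt_0_compat; [|pos].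
    apply Rmult_gt_compat_r with (r := (sigma + mu) * (gamma + mu) * (p + mu * N)) in HR0;
      [|exact Hden].
    unfold Rdiv in HR0. rewrite Rmult_assoc, Rinv_l in HR0 by lra. lra. }
  split; [unfold Se; pos|]. split; [|exact HIe].
  unfold Ee. apply Rmult_lt_0_compat; [pos|exact HIe].
Qed.

Lemma endemic_equilibrium_eqs N mu beta sigma gamma p rho :
  0 < N -> 0 < mu -> 0 < beta -> 0 < sigma -> 0 < gamma -> rho < 1 ->
  let b := beta * (1 - rho) / N in
  let S := Se N mu beta sigma gamma rho in
  let E := Ee N mu beta sigma gamma p rho in
  let I := Ie N mu beta sigma gamma p rho in
  mu * N = b * S * I + (p / N + mu) * S /\ b * S * I = (sigma + mu) * E /\
  sigma * E = (gamma + mu) * I.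
Proof.
  intros HN Hmu Hbeta Hsigma Hgamma Hrho b S E I.
  unfold b, S, E, I, Se, Ee, Ie. repeat split; field; repeat split; lra.
Qed.

Lemma is_solution_sei N mu beta sigma gamma p rho S E I :
  is_solution N mu beta sigma gamma p rho S E I ->
  sei_solution (mu * N) (beta * (1 - rho) / N) (p / N + mu) (sigma + mu) sigma (gamma + mu)
    S E I.
Proof.
  intros [Hder Hright]. split; [|exact Hright].
  intros t Ht. unfold sei_fS, sei_fE, sei_fI.
  destruct (Hder t Ht) as (DS & DE & DI). unfold fS, fE, fI in *.
  replace (mu * N - beta * (1 - rho) / N * S t * I t - (p / N + mu) * S t)
    with (mu * N - beta * (1 - rho) / N * S t * I t - p / N * S t - mu * S t) by ring.
  auto.
Qed.

Theorem mainTheorem12 (N mu beta sigma gamma p rho : R) :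
  0 < N -> 0 < mu -> 0 < beta -> 0 < sigma -> 0 < gamma -> 0 < p ->
  0 < rho < 1 ->
  basic_R0 N mu beta sigma gamma p rho > 1 ->
  GAS_interior N mu beta sigma gamma p rho
    (Se N mu beta sigma gamma rho)
    (Ee N mu beta sigma gamma p rho)
    (Ie N mu beta sigma gamma p rho).
Proof.
  intros HN Hmu Hbeta Hsigma Hgamma Hp Hrho HR0.
  destruct (endemic_equilibrium_pos N mu beta sigma gamma p rho) as (HSe & HEe & HIe); auto.
  destruct (endemic_equilibrium_eqs N mu beta sigma gamma p rho HN Hmu Hbeta Hsigma Hgamma
    (proj2 Hrho)) as (HeqS & HeqE & HeqI).
  assert (Hb : 0 < beta * (1 - rho) / N) by pos.
  assert (Hd : 0 < p / N + mu) by (assert (0 < p / N) by pos; lra).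
  assert (Ha : 0 < sigma + mu) by lra.
  split.
  - intros eps Heps.
    destruct (sei_stable _ _ _ _ _ _ _ _ _ Hb Hd Ha Hsigma HSe HEe HIe HeqS HeqE HeqI
      eps Heps) as (delta & Hdelta & Hstable).
    exists delta. split; [exact Hdelta|].
    intros S E I Hsol _. apply Hstable, is_solution_sei, Hsol.
  - intros S E I Hsol (HS0 & HE0 & HI0 & _). apply is_solution_sei in Hsol.
    exact (sei_solution_converges _ _ _ _ _ _ _ _ _ Hb Hd Ha Hsigma HSe HEe HIe HeqS HeqE HeqI
      _ _ _ Hsol HS0 HE0 HI0).
Qed.
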